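(* (1) For $1\le k\le m-1$, the map $\psi_k:A_k\to(A_0)^{p^k}$, $f\mapsto\big(f(\chi_1\xi_m,\dots,\chi_k\xi_m)\big)_{(\chi_1,\dots,\chi_k)\in\mu_p^k}$, is homogeneous and injective. (2) The image of $M_m=\xi_m^p-\big(\sum_{j=1}^m z_j\xi_j\big)^p$ in $A_{m-1}$ is a non-zero divisor; i.e. multiplication by $M_m$ is an injective homogeneous $A$-linear map $A_{m-1}\to A_{m-1}$ of degree $p$. Consequently $M_1,\dots,M_m$ form a regular sequence in $A[\xi_1,\dots,\xi_m]$.
   Context: $\mu_p=\{\zeta_p^j\mid 0\le j\le p-1\}$, $\zeta_p=e^{2\pi\sqrt{-1}/p}$. $A=\mathbb C[z_1^{\pm1},\dots,z_m^{\pm1},1/R(z)]$ with $R(z)=\prod_{(i_1,\dots,i_m)\in\{1,\dots,p\}^m}(1-\zeta_p^{i_1}z_1-\cdots-\zeta_p^{i_m}z_m)$. $M_k=\xi_k^p-\xi_m^p$ for $1\le k\le m-1$; $A_0=A[\xi_m]$, $A_k=A[\xi_m,\xi_1,\dots,\xi_k]/(M_1,\dots,M_k)$, graded by total degree in the $\xi$'s. *)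

From HB Require Import structures.
From mathcomp Require Import all_boot all_order all_algebra.
From mathcomp Require Import complex Rstruct mpoly fraction.
From Stdlib Require Import Rdefinitions Rtrigo_def Rtrigo1.

Set Implicit Arguments.
Unset Strict Implicit.
Unset Printing Implicit Defensive.

Import Order.TTheory GRing.Theory Num.Theory.
Local Open Scope ring_scope.
Local Notation "x %:F" := (@FracField.tofrac _ x).

Definition CC : numClosedFieldType := complex Rdefinitions.R.

Definition zeta (p : nat) : CC :=
  (cos (2 * PI / p%:R) +i* sin (2 * PI / p%:R))%C.

Definition mu (p : nat) : pred CC := [pred c | [exists j : 'I_p, c == zeta p ^+ j]].

Section Rings.
Variables (p n : nat).
(* m = n.+1 ; the variables z_1..z_m and xi_1..xi_m are indexed by 'I_m,
   z_j / xi_j corresponding to the ordinal j-1; xi_m is ord_max. *)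
Local Notation m := n.+1.

Definition PZ := {mpoly CC[m]}.
Definition KZ := {fraction PZ}.

Definition cK (c : CC) : KZ := (c%:MP : PZ)%:F.
Definition zK (j : 'I_m) : KZ := ('X_j : PZ)%:F.

Definition Rpoly : PZ :=
  \prod_(t : {ffun 'I_m -> 'I_p}) (1 - \sum_(j < m) (zeta p ^+ (t j).+1) *: 'X_j).

(* A = C[z^{+-1}, 1/R(z)] as a subring of C(z) *)
Definition inA (x : KZ) : Prop :=
  exists (f : PZ) (a : 'X_{1..m}) (e : nat),
    x = f%:F / (('X_[a] * Rpoly ^+ e : PZ)%:F).

Definition PX := {mpoly KZ[m]}.

(* f lies in A[xi_i | i in V] *)
Definition inAX (V : pred 'I_m) (f : PX) : Prop :=
  (forall a, inA f@_a) /\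
  (forall a, a \in msupp f -> forall i, i \notin V -> a i = 0%N).

(* variables of A_k : xi_m, xi_1, ..., xi_k *)
Definition Vk (k : nat) : pred 'I_m := [pred i : 'I_m | (val i < k)%nat || (i == ord_max)].

(* M_k = xi_k^p - xi_m^p (1 <= k <= m-1),
   M_m = xi_m^p - (sum_j z_j xi_j)^p  ; generator M_{i+1} is  Mgen i *)
Definition Mm : PX := 'X_ord_max ^+ p - (\sum_(j < m) zK j *: 'X_j) ^+ p.
Definition Mgen (i : 'I_m) : PX :=
  if i == ord_max then Mm else 'X_i ^+ p - 'X_ord_max ^+ p.

Definition inI (V : pred 'I_m) (k : nat) (f : PX) : Prop :=
  exists g : 'I_m -> PX,
    (forall i, inAX V (g i)) /\ f = \sum_(i < m | (i < k)%nat) g i * Mgen i.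

(* the substitution xi_i |-> chi_i xi_m (i <= k), chi = (chi_1..chi_k) *)
Definition psi_subst (k : nat) (chi : 'I_k -> CC) : m.-tuple PX :=
  [tuple match (insub (val i) : option 'I_k) with
         | Some j => cK (chi j) *: 'X_ord_max
         | None => 'X_i
         end | i < m].

(* the chi-component of psi_k(f) *)
Definition psi (k : nat) (chi : 'I_k -> CC) (f : PX) : PX :=
  f \mPo psi_subst chi.

End Rings.

Arguments Vk : clear implicits.

From Stdlib Require Import Reals Lra.
From HB Require Import structures.
From mathcomp Require Import all_boot all_order all_algebra.
From mathcomp Require Import complex Rstruct mpoly fraction.

Set Implicit Arguments.
Unset Strict Implicit.
Unset Printing Implicit Defensive.

Import Order.TTheory GRing.Theory Num.Theory.
Local Open Scope ring_scope.
Local Notation "x %:F" := (@FracField.tofrac _ x).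

(* [psi_k chi] kills [M_1, ..., M_k] because [chi_i ^ p = 1].  Conversely,
   modulo [(M_1, ..., M_k)] every element of [A_k] is congruent to a polynomial
   of degree [< p] in each of [xi_1, ..., xi_k], and such a reduced polynomial
   is recovered from its images under all the [psi_k chi], [chi] in [mu_p ^ k],
   by discrete Fourier inversion; hence the kernel of [psi_k] is exactly the
   ideal.  Since [psi_k chi] is a ring morphism into the domain [C(z)[xi]], an
   element [g] none of whose images [psi_k chi g] vanishes is a non-zero divisor
   modulo the ideal.  This applies to [M_m] with [k = m - 1], whose image is
   [(1 - (z_m + sum_j chi_j z_j) ^ p) xi_m ^ p], and to [M_(k+1)] for
   [k < m - 1], whose image is [xi_(k+1) ^ p - xi_m ^ p]. *)

Section RootsOfUnity.
Local Open Scope R_scope.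

Definition zeta_angle (p e : nat) : Rdefinitions.R := INR e * (2 * PI / INR p).

Lemma zeta_expE p e :
  (zeta p ^+ e = (cos (zeta_angle p e) +i* sin (zeta_angle p e))%C)%R.
Proof.
elim: e => [|e IH]; first by rewrite expr0 /zeta_angle /= Rmult_0_l cos_0 sin_0.
rewrite exprSr IH /zeta -INRE.
have -> : zeta_angle p e.+1 = zeta_angle p e + 2 * PI / INR p.
  by rewrite /zeta_angle S_INR; ring.
by rewrite cos_plus sin_plus /=; congr (Complex _ _); exact: addrC.
Qed.

Lemma zeta_exp_eq1 p e : (0 < p)%N -> (zeta p ^+ e == 1)%R = (p %| e)%N.
Proof.
move=> p_gt0; have p_neq0 : INR p <> 0 by apply: not_0_INR; case: p p_gt0.
have zeta_exp_mulp q : (zeta p ^+ (q * p) = 1)%R.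
  rewrite zeta_expE.
  have -> : zeta_angle p (q * p) = 0 + 2 * INR q * PI.
    by rewrite /zeta_angle mult_INR; field.
  by rewrite cos_period sin_period cos_0 sin_0.
rewrite (divn_eq e p) exprD zeta_exp_mulp mul1r dvdn_addr ?dvdn_mull //.
have := ltn_pmod e p_gt0; set r := (e %% p)%N => r_lt_p.
have [->|r_gt0] := posnP r; first by rewrite expr0 eqxx dvdn0.
rewrite (gtnNdvd r_gt0 r_lt_p) zeta_expE.
apply/negbTE/eqP => [[]] /=.
set x := INR r * PI / INR p.
have -> : zeta_angle p r = 2 * x by rewrite /zeta_angle /x; field.
rewrite cos_2a_sin.
have hr : 0 < INR r by apply: lt_0_INR; apply/ssrnat.ltP.
have hrp : INR r < INR p by apply: lt_INR; apply/ssrnat.ltP.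
have hx : x * INR p = INR r * PI by rewrite /x; field.
have hpi := PI_RGT_0.
(* 0 < x < pi, so sin x > 0 and cos (2 x) = 1 - 2 sin^2 x < 1 *)
have : 0 < sin x.
  apply: sin_gt_0.
  - by apply: Rdiv_lt_0_compat; [apply: Rmult_lt_0_compat | lra].
  - by apply: (Rmult_lt_reg_r (INR p)); [lra | rewrite hx; nra].
move=> sin_gt0 h _; change (GRing.one _) with 1 in h; nra.
Qed.

End RootsOfUnity.

Lemma mu_expp p c : (0 < p)%N -> c \in mu p -> c ^+ p = 1.
Proof.
move=> p_gt0 /existsP [j /eqP ->]; rewrite -exprM; apply/eqP.
by rewrite zeta_exp_eq1 // dvdn_mull.
Qed.

Lemma sum_zeta_exp p e : (0 < p)%N ->
  \sum_(l < p) zeta p ^+ (l * e) = if (p %| e)%N then p%:R else 0.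
Proof.
move=> p_gt0; under eq_bigr do rewrite mulnC exprM.
set y := zeta p ^+ e; case: ifP => p_dvd_e.
  have /eqP -> : y == 1 by rewrite zeta_exp_eq1.
  rewrite (eq_bigr (fun _ => 1)) => [|l _]; last exact: expr1n.
  by rewrite sumr_const card_ord.
have y1_neq0 : y - 1 != 0 by rewrite subr_eq0 zeta_exp_eq1 // p_dvd_e.
have : (y - 1) * \sum_(i < p) y ^+ i = 0.
  rewrite -subrX1 -exprM mulnC exprM.
  have /eqP -> : zeta p ^+ p == 1 by rewrite zeta_exp_eq1 // dvdnn.
  by rewrite expr1n subrr.
by move/eqP; rewrite mulf_eq0 (negbTE y1_neq0) => /eqP.
Qed.

Section Closure.
Variables (p n : nat).
Local Notation m := n.+1.
Local Notation K := (KZ n).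
Local Notation PXn := (PX n).
Implicit Types (x y : K) (V : pred 'I_m) (f g : PXn).

Lemma cK0 : cK n 0 = 0.
Proof. by rewrite /cK mpolyC0 tofrac0. Qed.

Lemma cKD (c d : CC) : cK n (c + d) = cK n c + cK n d.
Proof. by rewrite /cK raddfD tofracD. Qed.

Lemma cKM (c d : CC) : cK n (c * d) = cK n c * cK n d.
Proof. by rewrite /cK rmorphM tofracM. Qed.

Lemma cK1 : cK n 1 = 1.
Proof. by rewrite /cK mpolyC1 tofrac1. Qed.

Lemma cKXn (c : CC) e : cK n (c ^+ e) = cK n c ^+ e.
Proof. by rewrite /cK rmorphXn tofracXn. Qed.

Lemma cK_eq0 (c : CC) : (cK n c == 0) = (c == 0).
Proof. by rewrite /cK tofrac_eq0 mpolyC_eq0. Qed.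

Definition den (a : 'X_{1..m}) (e : nat) : PZ n := 'X_[a] * Rpoly p n ^+ e.

Lemma Rpoly_neq0 : Rpoly p n != 0.
Proof.
apply/eqP => /(congr1 (meval (fun _ => (0 : CC)))).
rewrite meval0 /Rpoly rmorph_prod big1 ?meval0 => [/eqP|t _].
  by rewrite oner_eq0.
rewrite rmorphB rmorph1 rmorph_sum big1 ?subr0 // => j _ /=.
by rewrite mevalZ mevalXU mulr0.
Qed.

Lemma tofrac_den_neq0 a e : (den a e)%:F != 0.
Proof.
rewrite tofrac_eq0 /den mulf_neq0 ?expf_neq0 ?Rpoly_neq0 //.
by rewrite -msupp_eq0 msuppX.
Qed.

Lemma denD a e a' e' : den (a + a') (e + e') = den a e * den a' e'.
Proof. by rewrite /den mpolyXD exprD mulrACA. Qed.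

Lemma inA_tofrac (f : PZ n) : inA p f%:F.
Proof. by exists f, 0%MM, 0%N; rewrite mpolyX0 expr0 mulr1 tofrac1 divr1. Qed.

Lemma inA0 : inA p (0 : K). Proof. by rewrite -tofrac0; apply: inA_tofrac. Qed.
Lemma inA1 : inA p (1 : K). Proof. by rewrite -tofrac1; apply: inA_tofrac. Qed.

Lemma inAD x y : inA p x -> inA p y -> inA p (x + y).
Proof.
move=> [f [a [e ->]]] [g [b [d ->]]].
exists (f * den b d + g * den a e), (a + b)%MM, (e + d)%N.
have := tofrac_den_neq0 a e; have := tofrac_den_neq0 b d.
rewrite -!/(den _ _) denD => den_bd den_ae.
by rewrite (addf_div _ _ den_ae den_bd) tofracD !tofracM.
Qed.

Lemma inAN x : inA p x -> inA p (- x).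
Proof. by move=> [f [a [e ->]]]; exists (- f), a, e; rewrite tofracN mulNr. Qed.

Lemma inAM x y : inA p x -> inA p y -> inA p (x * y).
Proof.
move=> [f [a [e ->]]] [g [b [d ->]]].
exists (f * g), (a + b)%MM, (e + d)%N.
by rewrite -!/(den _ _) denD mulf_div !tofracM.
Qed.

Lemma inA_sum (I : Type) (r : seq I) (P : pred I) (F : I -> K) :
  (forall i, P i -> inA p (F i)) -> inA p (\sum_(i <- r | P i) F i).
Proof. by move=> h; apply: (big_ind (@inA p n)); [apply: inA0|apply: inAD|]. Qed.

Lemma inAX_coef V f a : inAX p V f -> inA p f@_a.
Proof. by case=> h _; apply: h. Qed.

Lemma inAX_supp V f a i : inAX p V f -> a \in msupp f -> i \notin V -> a i = 0%N.
Proof. by move=> [_ h] /h; apply. Qed.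

Lemma inAX0 V : inAX p V 0.
Proof. by split=> [a|a]; rewrite ?mcoeff0 ?msupp0 //; apply: inA0. Qed.

Lemma inAXD V f g : inAX p V f -> inAX p V g -> inAX p V (f + g).
Proof.
move=> hf hg; split=> [a|a /msuppD_le].
  by rewrite mcoeffD; apply: inAD; [apply: inAX_coef hf|apply: inAX_coef hg].
by rewrite mem_cat => /orP[] ha i; [apply: inAX_supp hf ha|apply: inAX_supp hg ha].
Qed.

Lemma inAXN V f : inAX p V f -> inAX p V (- f).
Proof.
move=> hf; split=> [a|a]; first by rewrite mcoeffN; apply/inAN/(inAX_coef _ hf).
by rewrite (perm_mem (msuppN f)) => ha i; apply: inAX_supp hf ha.
Qed.

Lemma inAXB V f g : inAX p V f -> inAX p V g -> inAX p V (f - g).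
Proof. by move=> hf hg; apply/inAXD/inAXN. Qed.

Lemma inAXZ V c f : inA p c -> inAX p V f -> inAX p V (c *: f).
Proof.
move=> hc hf; split=> [a|a /msuppZ_le ha i].
  by rewrite mcoeffZ; apply/inAM/(inAX_coef _ hf).
exact: inAX_supp hf ha.
Qed.

Lemma inAXM V f g : inAX p V f -> inAX p V g -> inAX p V (f * g).
Proof.
move=> hf hg; split=> [a|a /msuppM_le /allpairsP [[a1 a2] /= [h1 h2 ->]] i hi].
  rewrite mcoeffM; apply: inA_sum => k _.
  by apply: inAM; [apply: inAX_coef hf|apply: inAX_coef hg].
by rewrite mnmDE (inAX_supp hf h1 hi) (inAX_supp hg h2 hi).
Qed.

Lemma inAX_monomial V c (a : 'X_{1..m}) :
  inA p c -> (forall i, i \notin V -> a i = 0%N) -> inAX p V (c *: 'X_[a]).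
Proof.
move=> hc ha; split=> [b|b /msuppZ_le].
  rewrite mcoeffZ mcoeffX; apply: inAM => //.
  by case: (a == b); [apply: inA1|apply: inA0].
by rewrite msuppX inE => /eqP ->.
Qed.

Lemma inAXX V i : i \in V -> inAX p V 'X_i.
Proof.
move=> iV; rewrite -[X in inAX _ _ X]scale1r.
apply: inAX_monomial; first exact: inA1.
by move=> j; rewrite mnm1E; case: eqP => // <-; rewrite iV.
Qed.

Lemma inAX_sum V (I : Type) (r : seq I) (P : pred I) (F : I -> PXn) :
  (forall i, P i -> inAX p V (F i)) -> inAX p V (\sum_(i <- r | P i) F i).
Proof. by move=> h; apply: (big_ind (inAX p V)); [apply: inAX0|apply: inAXD|]. Qed.

Lemma inAXXn V f e : inAX p V f -> inAX p V (f ^+ e).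
Proof.
move=> hf; elim: e => [|e IH]; last by rewrite exprS; apply: inAXM.
rewrite expr0 -[1]scale1r -mpolyX0; apply: inAX_monomial => [|i _].
  exact: inA1.
by rewrite mnm0E.
Qed.

Lemma inI0 V k : inI p V k 0.
Proof.
exists (fun _ => 0); split=> [i|]; first exact: inAX0.
by rewrite big1 // => i; rewrite mul0r.
Qed.

Lemma inID V k f g : inI p V k f -> inI p V k g -> inI p V k (f + g).
Proof.
move=> [g1 [h1 ->]] [g2 [h2 ->]]; exists (fun i => g1 i + g2 i); split.
  by move=> i; apply: inAXD.
by rewrite -big_split; apply: eq_bigr => i _; rewrite mulrDl.
Qed.

Lemma inIMl V k h f : inAX p V h -> inI p V k f -> inI p V k (h * f).
Proof.
move=> hh [g [hg ->]]; exists (fun i => h * g i); split.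
  by move=> i; apply: inAXM.
by rewrite mulr_sumr; apply: eq_bigr => i _; rewrite mulrA.
Qed.

Lemma inI_Mgen V k h (i : 'I_m) : (i < k)%N -> inAX p V h -> inI p V k (h * Mgen p i).
Proof.
move=> ik hh; exists (fun j => if j == i then h else 0); split.
  by move=> j; case: eqP => _ //; apply: inAX0.
rewrite (bigD1 i) //= eqxx big1 ?addr0 // => j /andP [_ /negbTE ->].
by rewrite mul0r.
Qed.

End Closure.

Section Substitution.
Variables (p n k : nat).
Hypothesis p_gt0 : (0 < p)%N.
Hypothesis k_le_n : (k <= n)%N.
Local Notation m := n.+1.
Local Notation PXn := (PX n).
Implicit Types (chi : 'I_k -> CC) (V : pred 'I_m) (f g : PXn) (a : 'X_{1..m}).

Definition subst_var (i : 'I_m) : 'I_m := if (i < k)%N then ord_max else i.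
Definition subst_scalar chi (i : 'I_m) : CC :=
  if insub (val i) is Some j then chi j else 1.
Definition subst_mnm a : 'X_{1..m} := (\sum_(i < m) U_(subst_var i) *+ a i)%MM.
Definition subst_weight chi a : CC := \prod_(i < m) subst_scalar chi i ^+ a i.

Lemma lt_neq_max (i : 'I_m) : (i < k)%N -> i != ord_max.
Proof. by move=> ik; apply: contraTneq ik => ->; rewrite -leqNgt. Qed.

Lemma subst_var_max : subst_var ord_max = ord_max.
Proof. by rewrite /subst_var; case: ifP. Qed.

Lemma subst_scalar_ge chi (i : 'I_m) : ~~ (i < k)%N -> subst_scalar chi i = 1.
Proof. by move=> ik; rewrite /subst_scalar; case: insubP => // j; rewrite (negbTE ik). Qed.

Lemma subst_scalar_max chi : subst_scalar chi ord_max = 1.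
Proof. by rewrite subst_scalar_ge // -leqNgt. Qed.

Lemma tnth_psi_subst chi i :
  tnth (psi_subst n chi) i = cK n (subst_scalar chi i) *: 'X_(subst_var i).
Proof.
rewrite tnth_mktuple /subst_scalar /subst_var.
by case: insubP => [j -> //|/negbTE ->]; rewrite cK1 scale1r.
Qed.

Lemma psiX chi i : psi chi 'X_i = cK n (subst_scalar chi i) *: 'X_(subst_var i).
Proof. by rewrite /psi comp_mpolyXU -tnth_nth tnth_psi_subst. Qed.

Lemma psiM chi f g : psi chi (f * g) = psi chi f * psi chi g.
Proof. exact: rmorphM. Qed.

Lemma psiB chi f g : psi chi (f - g) = psi chi f - psi chi g.
Proof. exact: raddfB. Qed.

Lemma psiXn chi f e : psi chi (f ^+ e) = psi chi f ^+ e.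
Proof. exact: rmorphXn. Qed.

Lemma psiE chi f :
  psi chi f = \sum_(a <- msupp f) (f@_a * cK n (subst_weight chi a)) *: 'X_[subst_mnm a].
Proof.
rewrite /psi comp_mpolyE; apply: eq_bigr => a _.
under eq_bigr do rewrite tnth_psi_subst exprZn.
rewrite scaler_prod scalerA; congr (_ * _ *: _).
  by rewrite (big_morph _ (cKM n) (cK1 n)); apply: eq_bigr => i _; rewrite cKXn.
rewrite /subst_mnm (big_morph (fun b => 'X_[b] : PXn) (@mpolyXD _ _) (@mpolyX0 _ _)).
by apply: eq_bigr => i _; rewrite mpolyXn.
Qed.

Lemma mcoeff_psi chi f b : (psi chi f)@_b =
  \sum_(a <- msupp f | subst_mnm a == b) f@_a * cK n (subst_weight chi a).
Proof.
rewrite psiE raddf_sum [RHS]big_mkcond; apply: eq_bigr => a _ /=.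
by rewrite mcoeffZ mcoeffX; case: eqP; rewrite ?mulr1 ?mulr0.
Qed.

Lemma subst_mnmE a i : subst_mnm a i = (\sum_(j < m | subst_var j == i) a j)%N.
Proof.
rewrite /subst_mnm mnm_sumE [RHS]big_mkcond /=; apply: eq_bigr => j _.
by rewrite mulmnE mnm1E; case: eqP; rewrite ?mul1n ?mul0n.
Qed.

Lemma subst_mnm_lt a (i : 'I_m) : (i < k)%N -> subst_mnm a i = 0%N.
Proof.
move=> ik; rewrite subst_mnmE big_pred0 // => j; rewrite /subst_var.
by case: ifP => jk; apply: contraTF ik => /eqP <-; rewrite ?jk // -leqNgt.
Qed.

Lemma subst_mnm_ge a i : i != ord_max -> ~~ (i < k)%N -> subst_mnm a i = a i.
Proof.
move=> i_neq_max ik; rewrite subst_mnmE (big_pred1 i) // => j /=; rewrite /subst_var.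
case: ifP => [jk|_]; last by rewrite eq_sym.
by rewrite eq_sym (negbTE i_neq_max); apply/esym; apply: contraTF jk => /eqP ->.
Qed.

Lemma subst_mnm_max a :
  subst_mnm a ord_max = (a ord_max + \sum_(j < m | (j < k)%N) a j)%N.
Proof.
rewrite subst_mnmE (bigD1 ord_max) ?subst_var_max //=; congr (_ + _)%N.
apply: eq_bigl => j; rewrite /subst_var.
by case: ifP => jk; rewrite ?eqxx ?andbT ?andbN ?lt_neq_max.
Qed.

Lemma mdeg_subst_mnm a : mdeg (subst_mnm a) = mdeg a.
Proof.
rewrite /subst_mnm mdeg_sum mdegE; apply: eq_bigr => i _.
by rewrite mdegMn mdeg1 mul1n.
Qed.

Lemma psi_inAX chi f : inAX p (Vk n k) f -> inAX p (Vk n 0) (psi chi f).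
Proof.
move=> fV; rewrite psiE big_seq; apply: inAX_sum => a a_supp.
apply: inAX_monomial; first by apply: inAM; [apply: inAX_coef fV|apply: inA_tofrac].
move=> i; rewrite inE /= => i_neq_max.
have [ik|ik] := boolP (i < k)%N; first exact: subst_mnm_lt.
by rewrite subst_mnm_ge //; apply: (inAX_supp fV a_supp); rewrite inE negb_or ik.
Qed.

Lemma psi_homog chi f d : f \is d.-homog -> psi chi f \is d.-homog.
Proof.
move=> f_homog; rewrite psiE big_seq; apply: rpred_sum => a a_supp.
by apply: dhomogZ; rewrite dhomogX /= mdeg_subst_mnm (dhomog_mf f_homog).
Qed.

Lemma psi_Mgen_lt chi (i : 'I_m) : (forall j, chi j \in mu p) ->
  (i < k)%N -> psi chi (Mgen p i) = 0.
Proof.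
move=> chi_mu ik; rewrite /Mgen (negbTE (lt_neq_max ik)) psiB !psiXn !psiX.
rewrite subst_scalar_max subst_var_max cK1 scale1r /subst_var ik !exprZn.
rewrite /subst_scalar; case: insubP => [j _ _|]; last by rewrite ik.
by rewrite -cKXn mu_expp // cK1 scale1r subrr.
Qed.

Lemma psi_inI V chi f : (forall j, chi j \in mu p) -> inI p V k f -> psi chi f = 0.
Proof.
move=> chi_mu [g [_ ->]]; rewrite /psi raddf_sum big1 //= => i ik.
by rewrite -/(psi chi _) psiM psi_Mgen_lt // mulr0.
Qed.

Variable V : pred 'I_m.
Hypothesis lt_k_in_V : forall i : 'I_m, (i < k)%N -> i \in V.
Hypothesis max_in_V : ord_max \in V.

Definition reduced f :=
  forall a, a \in msupp f -> forall i : 'I_m, (i < k)%N -> (a i < p)%N.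

Definition low_mdeg a := (\sum_(i < m | (i < k)%N) a i)%N.

(* Each step trades [xi_i ^ p] for [xi_m ^ p] modulo [M_i], lowering [low_mdeg]. *)
Lemma reduced_repr_monomial N a c : (low_mdeg a < N)%N -> inA p c ->
  (forall i, i \notin V -> a i = 0%N) ->
  exists r, [/\ inAX p V r, reduced r & inI p V k (c *: 'X_[a] - r)].
Proof.
elim: N a => [//|N IH] a lowN hc aV.
have [a_red|] := boolP [forall i : 'I_m, (i < k)%N ==> (a i < p)%N].
  exists (c *: 'X_[a]); split; [exact: inAX_monomial| |by rewrite subrr; apply: inI0].
  move=> b /msuppZ_le; rewrite msuppX inE => /eqP -> i ik.
  by move/forallP/(_ i): a_red; rewrite ik.
case/forallPn => i; rewrite negb_imply -leqNgt => /andP [ik p_le_ai].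
set b := (a - U_(i) *+ p)%MM; set a' := (b + U_(ord_max) *+ p)%MM.
have i_neq_max := lt_neq_max ik.
have a_eq : a = (b + U_(i) *+ p)%MM.
  apply/mnmP => j; rewrite mnmDE mnmBE mulmnE mnm1E.
  by case: eqP => [<-|_]; rewrite ?mul1n ?subnK // mul0n subn0 addn0.
have a'_other j : j != i -> j != ord_max -> a' j = a j.
  move=> ji jm; rewrite mnmDE mnmBE !mulmnE !mnm1E.
  by rewrite eq_sym (negbTE ji) eq_sym (negbTE jm) !mul0n subn0 addn0.
have a'_i : a' i = (a i - p)%N.
  by rewrite mnmDE mnmBE !mulmnE !mnm1E eqxx eq_sym (negbTE i_neq_max) mul1n mul0n addn0.
have low_a : low_mdeg a = (low_mdeg a' + p)%N.
  rewrite /low_mdeg (bigD1 i) //= [X in _ = (X + _)%N](bigD1 i) //= a'_i.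
  rewrite -addnA [(_ + p)%N]addnC addnA subnK //; congr (_ + _)%N.
  by apply: eq_bigr => j /andP [jk ji]; rewrite a'_other // lt_neq_max.
have [r [rV r_red a'_r]] : exists r,
    [/\ inAX p V r, reduced r & inI p V k (c *: 'X_[a'] - r)].
  apply: IH => //.
    by rewrite -ltnS (leq_trans _ lowN) // ltnS low_a -{1}(addn0 (low_mdeg a')) ltn_add2l.
  move=> j jV; have ji : j != i by apply: contraNneq jV => ->; apply: lt_k_in_V.
  have jm : j != ord_max by apply: contraNneq jV => ->.
  by rewrite a'_other // aV.
exists r; split=> //; rewrite -(subrK (c *: 'X_[a']) (c *: 'X_[a])) -addrA.
apply: inID => //.
have -> : c *: 'X_[a] - c *: 'X_[a'] = (c *: 'X_[b]) * Mgen p i.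
  rewrite /Mgen (negbTE i_neq_max) mulrBr -!scalerAl {1}a_eq /a'.
  by rewrite !mpolyXD -!mpolyXn.
apply: inI_Mgen => //; apply: inAX_monomial => // j jV.
by apply/eqP; rewrite -leqn0 mnmBE (leq_trans (leq_subr _ _)) // aV.
Qed.

Lemma reduced_repr f : inAX p V f ->
  exists r, [/\ inAX p V r, reduced r & inI p V k (f - r)].
Proof.
move=> hf; rewrite {1}[f]mpolyE.
suff : forall s, {subset s <= msupp f} -> exists r,
    [/\ inAX p V r, reduced r & inI p V k (\sum_(a <- s) f@_a *: 'X_[a] - r)].
  by apply.
elim=> [_|a s IH s_supp].
  exists 0; split; [exact: inAX0| |by rewrite big_nil subrr; apply: inI0].
  by move=> a; rewrite msupp0.
have s_sub : {subset s <= msupp f} by move=> x sx; apply: s_supp; rewrite inE sx orbT.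
have [r1 [r1V r1_red s_r1]] := IH s_sub.
have a_supp : a \in msupp f := s_supp a (mem_head a s).
have [r2 [r2V r2_red a_r2]] := @reduced_repr_monomial (low_mdeg a).+1 a (f@_a)
   (ltnSn _) (inAX_coef _ hf) (fun i => inAX_supp hf a_supp).
exists (r2 + r1); split; [exact: inAXD| |].
  by move=> b /msuppD_le; rewrite mem_cat => /orP []; [exact: r2_red | exact: r1_red].
by rewrite big_cons opprD addrACA; apply: inID.
Qed.

Local Notation widen j := (widen_ord (leqW k_le_n) j).

Lemma subst_scalar_widen chi (j : 'I_k) : subst_scalar chi (widen j) = chi j.
Proof.
rewrite /subst_scalar; case: insubP => [j' _ e|]; last by rewrite /= ltn_ord.
by congr chi; apply/val_inj; rewrite e.
Qed.

Lemma subst_weightE chi a : subst_weight chi a = \prod_(j < k) chi j ^+ a (widen j).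
Proof.
rewrite /subst_weight (bigID (fun i : 'I_m => (i < k)%N)) /=.
rewrite [X in _ * X]big1 ?mulr1 => [|i ik]; last by rewrite subst_scalar_ge // expr1n.
by rewrite (big_ord_narrow (leqW k_le_n)); apply: eq_bigr => j _; rewrite subst_scalar_widen.
Qed.

Lemma subst_mnm_inj a a' : (forall j : 'I_k, a (widen j) = a' (widen j)) ->
  subst_mnm a = subst_mnm a' -> a = a'.
Proof.
move=> eq_low eq_subst; have eq_lt (i : 'I_m) (ik : (i < k)%N) : a i = a' i.
  by have := eq_low (Ordinal ik); congr (a _ = a' _); apply: val_inj.
apply/mnmP => i; have [ik|ik] := boolP (i < k)%N; first exact: eq_lt.
have [->|i_neq_max] := eqVneq i ord_max.
  have := congr1 (fun b : 'X_{1..m} => b ord_max) eq_subst; rewrite /= !subst_mnm_max.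
  by rewrite (eq_bigr _ eq_lt) => /addIn.
by have := congr1 (fun b : 'X_{1..m} => b i) eq_subst; rewrite /= !subst_mnm_ge.
Qed.

Lemma dvdn_predp_mul_add x y : (x < p)%N -> (y < p)%N ->
  (p %| (p - 1) * y + x)%N = (x == y).
Proof.
move=> x_lt_p y_lt_p; have [->|x_neq_y] := eqVneq x y.
  by rewrite -{2}(mul1n y) -mulnDl (subnK p_gt0) dvdn_mulr.
apply/negbTE; apply: contra x_neq_y => /dvdnP [q def_q].
have : ((p - 1) * y + x + y = p * y + x)%N.
  by rewrite -addnA [(x + y)%N]addnC addnA -{2}(mul1n y) -mulnDl (subnK p_gt0).
move/(congr1 (modn^~ p)); rewrite def_q -modnDml modnMl add0n mulnC modnMDl.
by rewrite !modn_small // => ->.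
Qed.

(* Orthogonality of the characters of [mu_p ^ k]; the exponent
   [(p - 1) * a0 + a] stands for [a - a0] modulo [p]. *)
Lemma character_sum_reduced r a a0 : reduced r -> a \in msupp r -> a0 \in msupp r ->
  subst_mnm a = subst_mnm a0 ->
  \prod_(j < k) \sum_(l < p) zeta p ^+ (l * ((p - 1) * a0 (widen j) + a (widen j)))
    = if a == a0 then p%:R ^+ k else 0.
Proof.
move=> r_red ra ra0 eq_subst; under eq_bigr do rewrite sum_zeta_exp //.
have low_lt_p b (j : 'I_k) : b \in msupp r -> (b (widen j) < p)%N.
  by move=> rb; apply: r_red => //=; exact: ltn_ord.
have [->|a_neq_a0] := eqVneq a a0.
  rewrite (eq_bigr (fun _ => p%:R)) => [|j _]; first by rewrite prodr_const card_ord.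
  by rewrite dvdn_predp_mul_add ?eqxx ?low_lt_p.
have [j a_j] : exists j : 'I_k, a (widen j) != a0 (widen j).
  apply/existsP; apply: contraTT a_neq_a0; rewrite negb_exists => /forallP eq_low.
  rewrite negbK; apply/eqP; apply: subst_mnm_inj => // j.
  by apply/eqP; move: (eq_low j); rewrite negbK.
by rewrite (bigD1 j) //= dvdn_predp_mul_add ?low_lt_p // (negbTE a_j) mul0r.
Qed.

(* Discrete Fourier inversion on [mu_p ^ k]: a weighted sum of the coefficients
   of the [psi chi r] at [subst_mnm a0] isolates [p ^ k * r@_a0]. *)
Lemma reduced_psi_eq0 r : reduced r ->
  (forall chi, (forall j, chi j \in mu p) -> psi chi r = 0) -> r = 0.
Proof.
move=> r_red psi_r0; apply: msuppnil0; case E: (msupp r) => [//|a0 s].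
have ra0 : a0 \in msupp r by rewrite E mem_head.
suff : r@_a0 * cK n (p%:R ^+ k) = 0.
  move/eqP; rewrite mulf_eq0 cK_eq0 expf_eq0 pnatr_eq0 gtn_eqF // andbF orbF.
  by move: ra0; rewrite mcoeff_msupp => /negbTE ->.
pose tau (t : {ffun 'I_k -> 'I_p}) j := zeta p ^+ t j.
have tau_mu t j : tau t j \in mu p by apply/existsP; exists (t j).
pose G (t : {ffun 'I_k -> 'I_p}) := \prod_(j < k) zeta p ^+ (t j * ((p - 1) * a0 (widen j))).
have sum_tau a : \sum_t cK n (G t) * (r@_a * cK n (subst_weight (tau t) a)) =
    r@_a * cK n (\prod_(j < k) \sum_(l < p)
                   zeta p ^+ (l * ((p - 1) * a0 (widen j) + a (widen j)))).
  rewrite bigA_distr_bigA /= (big_morph _ (cKD n) (cK0 n)) mulr_sumr.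
  apply: eq_bigr => t _; rewrite mulrCA -cKM subst_weightE /G -big_split /=.
  by congr (_ * cK n _); apply: eq_bigr => j _; rewrite /tau -exprM -exprD mulnDr.
transitivity (\sum_t cK n (G t) * (psi (tau t) r)@_(subst_mnm a0)); last first.
  by rewrite big1 // => t _; rewrite psi_r0 // mcoeff0 mulr0.
symmetry; under eq_bigr do rewrite mcoeff_psi mulr_sumr.
rewrite exchange_big /= big_mkcond (bigD1_seq a0) ?msupp_uniq //= eqxx.
rewrite sum_tau (character_sum_reduced r_red) // eqxx big_seq_cond big1 ?addr0 //.
move=> a /andP [ra a_neq]; case: eqP => // eq_subst.
by rewrite sum_tau (character_sum_reduced r_red) // (negbTE a_neq) cK0 mulr0.
Qed.

Lemma psi_kernel f : inAX p V f ->
  (forall chi, (forall j, chi j \in mu p) -> psi chi f = 0) -> inI p V k f.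
Proof.
move=> fV psi_f0; have [r [_ r_red f_r]] := reduced_repr fV.
suff r0 : r = 0 by rewrite r0 subr0 in f_r.
apply: (reduced_psi_eq0 r_red) => chi chi_mu.
by have := psi_inI chi_mu f_r; rewrite psiB psi_f0 // sub0r => /eqP; rewrite oppr_eq0 => /eqP.
Qed.

Lemma inI_cancel g f : inAX p V f ->
  (forall chi, (forall j, chi j \in mu p) -> psi chi g != 0) ->
  inI p V k (g * f) -> inI p V k f.
Proof.
move=> fV psi_g gf_I; apply: psi_kernel => // chi chi_mu.
have /eqP := psi_inI chi_mu gf_I; rewrite psiM mulf_eq0 => /orP [g0|/eqP //].
by move: (psi_g _ chi_mu); rewrite g0.
Qed.

End Substitution.

Section Generators.
Variables (p n : nat).
Hypothesis p_gt0 : (0 < p)%N.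
Local Notation m := n.+1.
Local Notation PXn := (PX n).

Lemma inAX_Mm : inAX p predT (Mm p n).
Proof.
apply: inAXB; apply: inAXXn; first exact: inAXX.
by apply: inAX_sum => j _; apply: inAXZ; [apply: inA_tofrac|apply: inAXX].
Qed.

Lemma Mm_homog : Mm p n \is p.-homog.
Proof.
have X_homog (i : 'I_m) : ('X_i : PXn) \is 1.-homog by rewrite dhomogX /= mdeg1.
have sum_homog : (\sum_(j < m) zK j *: 'X_j : PXn) \is 1.-homog.
  by apply: rpred_sum => j _; apply/dhomogZ/X_homog.
by apply: rpredB; [have := dhomogMn p (X_homog ord_max)|have := dhomogMn p sum_homog];
  rewrite mul1n.
Qed.

Lemma X_expn_neq0 (i : 'I_m) e : ('X_i : PXn) ^+ e != 0.
Proof. by rewrite expf_neq0 // -msupp_eq0 msuppX. Qed.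

(* [psi chi (Mm)] is [(1 - w ^ p) xi_m ^ p] with [w = z_m + sum_j chi_j z_j],
   and [1 - w ^ p] is non-zero since it takes the value [1] at [z = 0]. *)
Lemma psi_Mm_neq0 (chi : 'I_n -> CC) : psi chi (Mm p n) != 0.
Proof.
pose w : PZ n := \sum_(j < m) 'X_j * (subst_scalar chi j)%:MP.
have to_max (j : 'I_m) : subst_var n j = ord_max.
  rewrite /subst_var; case: ifP => // /negbT; rewrite -leqNgt => nj.
  by apply/val_inj/eqP; rewrite eqn_leq nj -ltnS ltn_ord.
have -> : psi chi (Mm p n) = (1 - w%:F ^+ p) *: 'X_ord_max ^+ p.
  rewrite /Mm psiB !psiXn psiX subst_scalar_max // subst_var_max cK1 scale1r.
  have -> : psi chi (\sum_(j < m) zK j *: 'X_j) = w%:F *: 'X_ord_max.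
    rewrite /psi !raddf_sum /= scaler_suml; apply: eq_bigr => j _.
    by rewrite linearZ /= -/(psi chi _) psiX to_max scalerA tofracM.
  by rewrite exprZn scalerBl scale1r.
rewrite scaler_eq0 negb_or X_expn_neq0 andbT -tofracXn -tofrac1 -tofracB tofrac_eq0.
apply/eqP => /(congr1 (meval (fun _ => (0 : CC)))).
rewrite meval0 mevalB meval1 rmorphXn /= raddf_sum big1 => [|j _]; last first.
  by rewrite /= mevalM mevalXU mul0r.
by rewrite expr0n gtn_eqF // subr0 => /eqP; rewrite oner_eq0.
Qed.

Lemma psi_Mgen_neq0 (i : 'I_m) (chi : 'I_i -> CC) : i != ord_max -> psi chi (Mgen p i) != 0.
Proof.
move=> i_neq_max; have i_le_n : (i <= n)%N by rewrite -ltnS.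
rewrite /Mgen (negbTE i_neq_max) psiB !psiXn !psiX subst_scalar_max //.
rewrite subst_var_max subst_scalar_ge ?ltnn // cK1 !scale1r /subst_var ltnn.
apply/eqP => /(congr1 (meval (fun j => if j == i then (1 : KZ n) else 0))).
rewrite mevalB !rmorphXn /= !mevalXU eqxx eq_sym (negbTE i_neq_max) expr1n expr0n gtn_eqF //.
by rewrite subr0 meval0 => /eqP; rewrite oner_eq0.
Qed.

Lemma Mgen_ideal_proper : ~ inI p predT m (1 : PXn).
Proof.
move=> [g [_ /(congr1 (meval (fun _ => (0 : KZ n))))]].
rewrite meval1 raddf_sum /= big1 => [/eqP|i _]; first by rewrite oner_eq0.
rewrite mevalM /Mgen; case: eqP => _; rewrite ?/Mm mevalB !rmorphXn /= mevalXU.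
  rewrite raddf_sum /= big1 ?expr0n ?gtn_eqF ?subrr ?mulr0 // => j _.
  by rewrite mevalZ mevalXU mulr0.
by rewrite mevalXU expr0n gtn_eqF // subrr mulr0.
Qed.

End Generators.

Unset Implicit Arguments.

Theorem mainTheorem10 (p n : nat) (p_gt0 : (0 < p)%nat) :
  (forall k : nat, (1 <= k)%nat -> (k <= n)%nat ->
     (forall f : PX n, inAX p (Vk n k) f ->
        forall chi : 'I_k -> CC, (forall j, chi j \in mu p) ->
          inAX p (Vk n 0) (psi chi f)) /\
     (forall f : PX n, inAX p (Vk n k) f -> inI p (Vk n k) k f ->
        forall chi : 'I_k -> CC, (forall j, chi j \in mu p) -> psi chi f = 0) /\
     (forall (f : PX n) (d : nat), inAX p (Vk n k) f -> f \is d.-homog ->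
        forall chi : 'I_k -> CC, (forall j, chi j \in mu p) ->
          psi chi f \is d.-homog) /\
     (forall f : PX n, inAX p (Vk n k) f ->
        (forall chi : 'I_k -> CC, (forall j, chi j \in mu p) -> psi chi f = 0) ->
        inI p (Vk n k) k f)) /\
  ((forall f : PX n, inAX p predT f -> inAX p predT (Mm p n * f)) /\
   (forall f : PX n, inAX p predT f -> inI p predT n f -> inI p predT n (Mm p n * f)) /\
   (forall (f : PX n) (d : nat), inAX p predT f -> f \is d.-homog ->
       Mm p n * f \is (d + p)%nat.-homog) /\
   (forall (a : KZ n) (f g : PX n), inA p a -> inAX p predT f -> inAX p predT g ->
       Mm p n * (a *: f + g) = a *: (Mm p n * f) + Mm p n * g) /\
   (forall f : PX n, inAX p predT f -> inI p predT n (Mm p n * f) -> inI p predT n f)) /\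
  ((forall (k : 'I_n.+1) (f : PX n), inAX p predT f ->
       inI p predT k (Mgen p k * f) -> inI p predT k f) /\
   ~ inI p predT n.+1 (1 : PX n)).
Proof.
have in_predT k (i : 'I_n.+1) : (i < k)%N -> i \in (predT : pred 'I_n.+1) by [].
have Mm_reg f : inAX p predT f -> inI p predT n (Mm p n * f) -> inI p predT n f.
  move=> fV; apply: (inI_cancel p_gt0 (leqnn n) (in_predT n) isT fV) => chi _.
  exact: psi_Mm_neq0.
split.
  move=> k _ k_le_n.
  have lt_k_in_Vk (i : 'I_n.+1) : (i < k)%N -> i \in Vk n k by rewrite inE => ->.
  have max_in_Vk : ord_max \in Vk n k by rewrite inE eqxx orbT.
  split; [|split; [|split]] => f.
  - by move=> fV chi _; apply: psi_inAX.
  - by move=> _ fI chi chi_mu; apply: psi_inI chi_mu fI.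
  - by move=> d _ f_homog chi _; apply: psi_homog.
  - exact: (psi_kernel p_gt0 k_le_n lt_k_in_Vk max_in_Vk).
split.
  split; [|split; [|split; [|split]]] => //.
  - by move=> f; apply: inAXM (inAX_Mm p n).
  - by move=> f _; apply: inIMl (inAX_Mm p n).
  - by move=> f d _ f_homog; rewrite addnC; apply: dhomogM (Mm_homog p n) f_homog.
  - by move=> a f g _ _ _; rewrite mulrDr scalerAr.
split; last exact: (Mgen_ideal_proper p_gt0).
move=> k f fV; have [->|k_neq_max] := eqVneq k ord_max.
  by rewrite /Mgen eqxx; apply: Mm_reg.
have k_le_n : (k <= n)%N by rewrite -ltnS.
apply: (inI_cancel p_gt0 k_le_n (in_predT k) isT fV) => chi _.
exact: psi_Mgen_neq0.
Qed.
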